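(* Let $u,v\in(0,1)$. (1) For any $s\le2$ with $s\ne1$, $$K_s^+(u,v)\ge K_2^+(u,v)\Big[1-(1-v)\Big(1-\big(\tfrac vu\big)^{2-s}\Big)\Big].$$ (2) For $s=1$, $K_1^+(u,v)\ge K_2^+(u,v)\cdot\frac vu$.
   Context: For $s\in\mathbb{R}$, $\phi_s(x)=x\log x-x+1$ if $s=1$; $\phi_s(x)=\frac{1-s+sx-x^s}{s(1-s)}$ if $s\ne0,1$; $\phi_s(x)=-\log x+x-1$ if $s=0$. $K_s(u,v)=v\,\phi_s(u/v)+(1-v)\,\phi_s\big(\frac{1-u}{1-v}\big)$ (the $\phi_s$-divergence between $\mathrm{Ber}(u)$ and $\mathrm{Ber}(v)$), and $K_s^+(u,v)=K_s(u,v)$ if $0<v<u<1$, $K_s^+(u,v)=0$ otherwise. In particular $K_2(u,v)=\frac{(u-v)^2}{2v(1-v)}$. *)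

From Stdlib Require Import Reals.
Open Scope R_scope.

(* phi_s(x) for x > 0; real powers via Rpower (x^s = exp (s ln x)). *)
Definition phi (s x : R) : R :=
  if Req_EM_T s 1 then x * ln x - x + 1
  else if Req_EM_T s 0 then - ln x + x - 1
  else (1 - s + s * x - Rpower x s) / (s * (1 - s)).

(* phi_s-divergence between Ber(u) and Ber(v). *)
Definition K (s u v : R) : R :=
  v * phi s (u / v) + (1 - v) * phi s ((1 - u) / (1 - v)).

Definition Kplus (s u v : R) : R :=
  if Rlt_dec 0 v then if Rlt_dec v u then if Rlt_dec u 1 then K s u v else 0 else 0 else 0.

(* phi_s(1) = phi_s'(1) = 0 and phi_s''(t) = t^(s-2), so a second-order Taylor
   bound gives phi_s(X) >= (X-1)^2/2 times the minimum of t^(s-2) over t between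
   1 and X.  For s <= 2 that minimum is (u/v)^(s-2) = (v/u)^(2-s) at X = u/v > 1
   and at least 1 at X = (1-u)/(1-v) < 1.  Summing the two terms of K_s gives
   (u-v)^2/2 * ((v/u)^(2-s)/v + 1/(1-v)), which is exactly the right-hand side
   of (1); this holds for s = 1 as well, and (2) follows since at s = 1 the
   bracket 1 - (1-v)(1-v/u) exceeds v/u. *)

From Stdlib Require Import Reals Lra.
From Coquelicot Require Import Coquelicot.
Open Scope R_scope.

Lemma Rpower_one_l (y : R) : Rpower 1 y = 1.
Proof. unfold Rpower. rewrite ln_1, Rmult_0_r. apply exp_0. Qed.

Lemma Rpower_sub_one (x y : R) : 0 < x -> Rpower x (y - 1) = Rpower x y / x.
Proof.
  intros Hx. unfold Rminus, Rdiv.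
  rewrite Rpower_plus, Rpower_Ropp, Rpower_1 by exact Hx. reflexivity.
Qed.

Lemma Rpower_inv_base (x y : R) : 0 < x -> Rpower (/ x) y = Rpower x (- y).
Proof. intros Hx. unfold Rpower. rewrite ln_Rinv by exact Hx. f_equal. ring. Qed.

Lemma Rpower_le_of_nonpos_exponent (a b e : R) :
  e <= 0 -> 0 < a <= b -> Rpower b e <= Rpower a e.
Proof.
  intros He Hab. replace e with (- - e) by ring. rewrite (Rpower_Ropp b), (Rpower_Ropp a).
  apply Rinv_le_contravar; [apply exp_pos |].
  apply Rle_Rpower_l; lra.
Qed.

Lemma mvt_from_one (g g' : R -> R) (X : R) :
  0 < X -> X <> 1 ->
  (forall t, 0 < t -> is_derive g t (g' t)) ->
  exists xi, (1 < xi < X \/ X < xi < 1) /\ g X - g 1 = g' xi * (X - 1).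
Proof.
  intros HX HX1 dg.
  destruct (Rlt_or_le X 1) as [Hlt | Hge].
  - destruct (MVT_cor2 g g' X 1) as [xi [E Hxi]]; [lra | |].
    + intros t Ht; apply is_derive_Reals, dg; lra.
    + exists xi; split; [lra | rewrite <- Ropp_minus_distr, E; ring].
  - destruct (MVT_cor2 g g' 1 X) as [xi [E Hxi]]; [lra | |].
    + intros t Ht; apply is_derive_Reals, dg; lra.
    + exists xi; split; [lra | exact E].
Qed.

Lemma deriv_nonneg_mul_sub (g g' : R -> R) (X : R) :
  0 < X ->
  (forall t, 0 < t -> is_derive g t (g' t)) ->
  (forall t, 1 <= t <= X \/ X <= t <= 1 -> 0 <= g' t) ->
  0 <= (X - 1) * (g X - g 1).
Proof.
  intros HX dg Hg'.
  destruct (Req_dec X 1) as [-> | HX1]; [lra |].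
  destruct (mvt_from_one g g' X HX HX1 dg) as [xi [Hxi ->]].
  replace ((X - 1) * (g' xi * (X - 1))) with (g' xi * (X - 1) ^ 2) by ring.
  apply Rmult_le_pos; [apply Hg'; lra | apply pow2_ge_0].
Qed.

Lemma ge_at_one_of_deriv_sign (g g' : R -> R) (X : R) :
  0 < X ->
  (forall t, 0 < t -> is_derive g t (g' t)) ->
  (forall t, 1 <= t <= X \/ X <= t <= 1 -> 0 <= (t - 1) * g' t) ->
  g 1 <= g X.
Proof.
  intros HX dg Hg'.
  destruct (Req_dec X 1) as [-> | HX1]; [lra |].
  destruct (mvt_from_one g g' X HX HX1 dg) as [xi [Hxi E]].
  assert (0 <= (xi - 1) * g' xi) by (apply Hg'; lra).
  destruct Hxi; nra.
Qed.

Lemma taylor2_lower_bound (F F1 F2 : R -> R) (c X : R) :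
  0 < X ->
  (forall t, 0 < t -> is_derive F t (F1 t)) ->
  (forall t, 0 < t -> is_derive F1 t (F2 t)) ->
  F 1 = 0 -> F1 1 = 0 ->
  (forall t, 1 <= t <= X \/ X <= t <= 1 -> c <= F2 t) ->
  c * (X - 1) ^ 2 / 2 <= F X.
Proof.
  intros HX dF dF1 F_1 F1_1 HF2.
  set (h1 := fun t => F1 t - c * (t - 1)).
  assert (dh1 : forall t, 0 < t -> is_derive h1 t (F2 t - c)).
  { intros t Ht. apply (is_derive_minus F1 (fun t => c * (t - 1))); [now apply dF1 |].
    auto_derive; [easy | lra]. }
  assert (dh : forall t, 0 < t -> is_derive (fun t => F t - c * (t - 1) ^ 2 / 2) t (h1 t)).
  { intros t Ht. apply (is_derive_minus F (fun t => c * (t - 1) ^ 2 / 2)); [now apply dF |].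
    auto_derive; [easy | lra]. }
  (* h1 is nondecreasing between 1 and X and vanishes at 1. *)
  assert (h1_sign : forall t, 1 <= t <= X \/ X <= t <= 1 -> 0 <= (t - 1) * h1 t).
  { intros t Ht.
    replace (h1 t) with (h1 t - h1 1) by (unfold h1; rewrite F1_1; ring).
    apply (deriv_nonneg_mul_sub h1 (fun t => F2 t - c)); [lra | exact dh1 |].
    intros r Hr. assert (c <= F2 r) by (apply HF2; lra). lra. }
  pose proof (ge_at_one_of_deriv_sign _ _ X HX dh h1_sign) as H.
  cbv beta in H. rewrite F_1 in H. lra.
Qed.

(* phi_s'; for s = 0 the generic branch is 1 - 1/x, the derivative of -ln x + x - 1. *)
Definition dphi (s x : R) : R :=
  if Req_EM_T s 1 then ln x else (1 - Rpower x (s - 1)) / (1 - s).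

Lemma is_derive_phi (s x : R) : 0 < x -> is_derive (phi s) x (dphi s x).
Proof.
  intros Hx. unfold phi, dphi.
  destruct (Req_EM_T s 1) as [-> | Hs1].
  - auto_derive; [lra | field; lra].
  - rewrite Rpower_sub_one by exact Hx.
    destruct (Req_EM_T s 0) as [-> | Hs0].
    + rewrite Rpower_O by exact Hx. auto_derive; [lra | field; lra].
    + unfold Rpower. auto_derive; [lra |]. field. repeat split; lra.
Qed.

Lemma is_derive_dphi (s x : R) : 0 < x -> is_derive (dphi s) x (Rpower x (s - 2)).
Proof.
  intros Hx. unfold dphi.
  replace (s - 2) with (s - 1 - 1) by ring. rewrite Rpower_sub_one by exact Hx.
  destruct (Req_EM_T s 1) as [-> | Hs1].
  - replace (1 - 1) with 0 by ring. rewrite Rpower_O by exact Hx.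
    auto_derive; [lra | field; lra].
  - unfold Rpower. auto_derive; [lra |]. field. lra.
Qed.

Lemma phi_one (s : R) : phi s 1 = 0.
Proof.
  unfold phi. rewrite ln_1, Rpower_one_l.
  destruct (Req_EM_T s 1) as [-> | Hs1]; [ring |].
  destruct (Req_EM_T s 0) as [-> | Hs0]; [ring |].
  field. lra.
Qed.

Lemma dphi_one (s : R) : dphi s 1 = 0.
Proof.
  unfold dphi. destruct (Req_EM_T s 1) as [-> | Hs1]; [apply ln_1 |].
  rewrite Rpower_one_l. field. lra.
Qed.

Lemma phi_ge_of_one_le (s X : R) :
  s <= 2 -> 1 <= X -> Rpower X (s - 2) * (X - 1) ^ 2 / 2 <= phi s X.
Proof.
  intros Hs HX.
  apply (taylor2_lower_bound (phi s) (dphi s) (fun t => Rpower t (s - 2)));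
    [lra | apply is_derive_phi | apply is_derive_dphi | apply phi_one | apply dphi_one |].
  intros t Ht. apply Rpower_le_of_nonpos_exponent; lra.
Qed.

Lemma phi_ge_of_le_one (s X : R) :
  s <= 2 -> 0 < X <= 1 -> (X - 1) ^ 2 / 2 <= phi s X.
Proof.
  intros Hs HX. replace ((X - 1) ^ 2 / 2) with (1 * (X - 1) ^ 2 / 2) by field.
  apply (taylor2_lower_bound (phi s) (dphi s) (fun t => Rpower t (s - 2)));
    [lra | apply is_derive_phi | apply is_derive_dphi | apply phi_one | apply dphi_one |].
  intros t Ht. rewrite <- (Rpower_one_l (s - 2)).
  apply Rpower_le_of_nonpos_exponent; lra.
Qed.

Lemma K_lower_bound (s u v : R) :
  s <= 2 -> 0 < v < u -> u < 1 ->
  (u - v) ^ 2 / 2 * (Rpower (v / u) (2 - s) / v + 1 / (1 - v)) <= K s u v.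
Proof.
  intros Hs Hvu Hu. unfold K.
  assert (Huv : 1 <= u / v) by (apply Rle_div_r; lra).
  assert (Hc : 0 < (1 - u) / (1 - v) <= 1).
  { split; [apply Rdiv_lt_0_compat; lra | apply Rle_div_l; lra]. }
  pose proof (phi_ge_of_one_le s (u / v) Hs Huv) as Hphi_u.
  pose proof (phi_ge_of_le_one s ((1 - u) / (1 - v)) Hs Hc) as Hphi_1u.
  replace (Rpower (u / v) (s - 2)) with (Rpower (v / u) (2 - s)) in Hphi_u.
  2: { replace (v / u) with (/ (u / v)) by (field; lra).
       rewrite Rpower_inv_base by lra. f_equal. ring. }
  apply Rle_trans with
    (v * (Rpower (v / u) (2 - s) * (u / v - 1) ^ 2 / 2)
     + (1 - v) * (((1 - u) / (1 - v) - 1) ^ 2 / 2)).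
  - right. field. lra.
  - apply Rplus_le_compat; apply Rmult_le_compat_l; lra.
Qed.

Lemma K_two (u v : R) :
  0 < u < 1 -> 0 < v < 1 -> K 2 u v = (u - v) ^ 2 / (2 * v * (1 - v)).
Proof.
  intros Hu Hv. unfold K, phi.
  destruct (Req_EM_T 2 1); [lra |]. destruct (Req_EM_T 2 0); [lra |].
  replace 2 with (INR 2) by (simpl; ring).
  rewrite !Rpower_pow by (apply Rdiv_lt_0_compat; lra).
  simpl. field. lra.
Qed.

Lemma K_ge_K_two (s u v : R) :
  s <= 2 -> 0 < v < u -> u < 1 ->
  K 2 u v * (1 - (1 - v) * (1 - Rpower (v / u) (2 - s))) <= K s u v.
Proof.
  intros Hs Hvu Hu. rewrite K_two by lra.
  eapply Rle_trans; [right | apply (K_lower_bound s u v Hs Hvu Hu)].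
  field. lra.
Qed.

Lemma K_one_ge_K_two (u v : R) :
  0 < v < u -> u < 1 -> K 2 u v * (v / u) <= K 1 u v.
Proof.
  intros Hvu Hu.
  pose proof (K_ge_K_two 1 u v ltac:(lra) Hvu Hu) as HK.
  replace (2 - 1) with 1 in HK by ring.
  rewrite Rpower_1 in HK by (apply Rdiv_lt_0_compat; lra).
  apply Rle_trans with (2 := HK), Rmult_le_compat_l.
  - rewrite K_two by lra. apply Rmult_le_pos; [apply pow2_ge_0 |].
    apply Rlt_le, Rinv_0_lt_compat. nra.
  - assert (v / u < 1) by (apply Rlt_div_l; lra).
    assert (0 <= (1 - v / u) * v) by (apply Rmult_le_pos; lra).
    lra.
Qed.

Lemma Kplus_of_lt (s u v : R) : 0 < v < u -> u < 1 -> Kplus s u v = K s u v.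
Proof.
  intros Hvu Hu. unfold Kplus.
  destruct (Rlt_dec 0 v); [| lra]. destruct (Rlt_dec v u); [| lra].
  destruct (Rlt_dec u 1); [reflexivity | lra].
Qed.

Lemma Kplus_of_ge (s u v : R) : u <= v -> Kplus s u v = 0.
Proof.
  intros Huv. unfold Kplus.
  destruct (Rlt_dec 0 v); [| reflexivity]. destruct (Rlt_dec v u); [lra | reflexivity].
Qed.

Theorem lemmaA11 (u v : R) (hu0 : 0 < u) (hu1 : u < 1) (hv0 : 0 < v) (hv1 : v < 1) :
  (forall s : R, s <= 2 -> s <> 1 ->
     Kplus s u v >= Kplus 2 u v * (1 - (1 - v) * (1 - Rpower (v / u) (2 - s))))
  /\ Kplus 1 u v >= Kplus 2 u v * (v / u).
Proof.
  destruct (Rle_or_lt u v) as [Huv | Hvu].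
  { split; [intros s _ _ |];
    rewrite !Kplus_of_ge, Rmult_0_l by exact Huv; lra. }
  split; [intros s Hs _ |]; rewrite !Kplus_of_lt by lra; apply Rle_ge.
  - apply K_ge_K_two; lra.
  - apply K_one_ge_K_two; lra.
Qed.
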